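(* Let $k\ge2$, $\sigma_i=\frac{i(k-i)}2$ for $i=0,\dots,k$, and $j\in\{1,\dots,k\}$. Let $M_k^j$ be the $(k-j+1)\times(k-j+1)$ tridiagonal matrix whose upper-diagonal entries are $(M_k^j)_{m,m+1}=\sigma_m$ ($m=1,\dots,k-j$), whose lower-diagonal entries are $(M_k^j)_{m+1,m}=\sigma_{j+m-1}$ ($m=1,\dots,k-j$), whose diagonal entries are $(M_k^j)_{m,m}=-(\sigma_{m-1}+\sigma_{j+m-1})$ ($m=1,\dots,k-j+1$) (so that each column sums to zero), and whose other entries vanish. Then $M_k^j$ is similar to the diagonal matrix $$\mathrm{diag}\big(0,\,-j,\,-(j+(j+1)),\,-(j+(j+1)+(j+2)),\,\dots,\,-(j+(j+1)+\dots+(k-1))\big).$$ *)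

From mathcomp Require Import all_boot all_order all_algebra.
Set Implicit Arguments. Unset Strict Implicit. Unset Printing Implicit Defensive.
Import Order.TTheory GRing.Theory Num.Theory.
Local Open Scope ring_scope.

Definition sigma (R : numFieldType) (k i : nat) : R := (i * (k - i))%N%:R / 2%:R.

(* M_k^j, a (k-j+1) x (k-j+1) matrix, indices shifted to 0-based:
   row a, column b (a,b in 0..k-j) correspond to 1-based m = a+1, n = b+1.
   (M)_{a,a+1} = sigma_{a+1},  (M)_{a+1,a} = sigma_{j+a},
   (M)_{a,a}   = -(sigma_a + sigma_{j+a}), 0 elsewhere. *)
Definition Mkj (R : numFieldType) (k j : nat) : 'M[R]_(k - j + 1) :=
  \matrix_(a, b)
    if b == a.+1 :> nat then sigma R k a.+1
    else if a == b.+1 :> nat then sigma R k (j + b)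
    else if a == b :> nat then - (sigma R k a + sigma R k (j + a))
    else 0.

Definition Dkj (R : numFieldType) (k j : nat) : 'M[R]_(k - j + 1) :=
  diag_mx (\row_(a < k - j + 1) - (\sum_(t < a) (j + t)%N%:R : R)).

From mathcomp Require Import all_boot all_order all_algebra.
From mathcomp Require Import ring zify.
Set Implicit Arguments. Unset Strict Implicit. Unset Printing Implicit Defensive.
Import Order.TTheory GRing.Theory Num.Theory.
Local Open Scope ring_scope.

(** Conjugating by the Pascal matrix [P_{d,c} = C(c,d)] turns [M_k^j] into a
    lower bidiagonal matrix: acting on functions of the column index, [M_k^j]
    is a second-order difference operator, and on the binomial basis
    [b |-> C(b,d)] it acts as [lambda_d C(., d) + sigma_{j+d-1} C(., d-1)], where
    [lambda_d = -(j + (j+1) + ... + (j+d-1))].  The [lambda_d] decrease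
    strictly, so this bidiagonal matrix has distinct diagonal entries and is
    diagonalised by an explicit unitriangular matrix of left eigenvectors. *)

Lemma sum_ord_if_eq (R : nmodType) (F : nat -> R) n x :
  \sum_(c < n) (if c == x :> nat then F c else 0) = if (x < n)%N then F x else 0.
Proof. by rewrite -big_mkcond big_ord1_eq. Qed.

Lemma unitrig_unitmx (R : comUnitRingType) n (A : 'M[R]_n) :
  is_trig_mx A -> (forall i, A i i = 1) -> A \in unitmx.
Proof. by move=> trigA A1; rewrite unitmxE det_trig // big1 ?unitr1. Qed.

Lemma similar_in_unitmx_trans (F : fieldType) n (P Q A B C : 'M[F]_n) :
  P \in unitmx -> Q \in unitmx -> P *m A = B *m P -> Q *m B = C *m Q ->
  similar_in unitmx A C.
Proof.
move=> Pu Qu PA QB; have QPu : Q *m P \in unitmx by rewrite unitmx_mul Pu Qu.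
by exists (Q *m P) => //; apply/similarP => //; rewrite -mulmxA PA !mulmxA QB.
Qed.

Section LowerBidiagonal.

Variables (R : fieldType) (n : nat) (l s : nat -> R).
Hypothesis l_neq : forall t a, (t < a < n)%N -> l a != l t.

Definition lbidiag_mx : 'M[R]_n :=
  \matrix_(d, e) if d == e :> nat then l d else if d == e.+1 :> nat then s e else 0.

Lemma lbidiag_mxE d e : lbidiag_mx d e =
  (if d == e :> nat then l e else 0) + (if d == e.+1 :> nat then s e else 0).
Proof.
rewrite mxE; have [de|] := eqVneq (d : nat) e.
  by rewrite de (ltn_eqF (ltnSn e)) addr0.
by rewrite add0r.
Qed.

Lemma lbidiag_mx_row d (g : nat -> R) :
  \sum_(e < n) lbidiag_mx d e * g e =
  l d * g d + (if d : nat is d'.+1 then s d' * g d' else 0).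
Proof.
under eq_bigr => e _.
  rewrite lbidiag_mxE mulrDl !(fun_if (fun x => x * g e)) !mul0r ![(d == _ :> nat)]eq_sym.
  over.
rewrite big_split (sum_ord_if_eq (fun e => l e * g e)) ltn_ord /=.
case: d => [[|d'] hd] /=; first by rewrite big1 ?addr0.
under eq_bigr do rewrite eqSS.
by rewrite (sum_ord_if_eq (fun e => s e * g e)) ltnW.
Qed.

Lemma lbidiag_mx_col e (f : nat -> R) :
  \sum_(d < n) f d * lbidiag_mx d e =
  f e * l e + (if (e.+1 < n)%N then f e.+1 * s e else 0).
Proof.
under eq_bigr do rewrite lbidiag_mxE mulrDr !(fun_if (GRing.mul _)) !mulr0.
rewrite big_split (sum_ord_if_eq (fun d => f d * l e)).
by rewrite (sum_ord_if_eq (fun d => f d * s e)) ltn_ord.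
Qed.

Definition lbidiag_eigcoef (a d : nat) : R :=
  if (d <= a)%N then \prod_(d <= t < a) (s t / (l a - l t)) else 0.

Definition lbidiag_eigmx : 'M[R]_n := \matrix_(a, d) lbidiag_eigcoef a d.

Lemma lbidiag_eigcoef_id a : lbidiag_eigcoef a a = 1.
Proof. by rewrite /lbidiag_eigcoef leqnn big_geq. Qed.

Lemma lbidiag_eigcoef_gt a d : (a < d)%N -> lbidiag_eigcoef a d = 0.
Proof. by rewrite /lbidiag_eigcoef ltnNge => /negbTE ->. Qed.

Lemma lbidiag_eigcoef_rec a d : (a < n)%N ->
  lbidiag_eigcoef a d * l d + lbidiag_eigcoef a d.+1 * s d = l a * lbidiag_eigcoef a d.
Proof.
move=> an; have [ad|da|->] := ltngtP a d.
- by rewrite !lbidiag_eigcoef_gt ?mul0r ?mulr0 ?addr0 // ltnW.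
- have la_neq : l a - l d != 0 by rewrite subr_eq0 l_neq ?da.
  by rewrite /lbidiag_eigcoef da ltnW // big_ltn //; field.
- by rewrite lbidiag_eigcoef_id lbidiag_eigcoef_gt // mul0r addr0 mulr1 mul1r.
Qed.

Lemma lbidiag_eigmx_conj :
  lbidiag_eigmx *m lbidiag_mx = diag_mx (\row_a l a) *m lbidiag_eigmx.
Proof.
apply/matrixP => a e; rewrite mul_diag_mx !mxE.
under eq_bigr do rewrite mxE.
rewrite lbidiag_mx_col -lbidiag_eigcoef_rec //.
case: ltnP => // ne; rewrite (@lbidiag_eigcoef_gt a e.+1) ?mul0r //.
exact: leq_trans (ltn_ord a) ne.
Qed.

Lemma lbidiag_eigmx_unit : lbidiag_eigmx \in unitmx.
Proof.
apply: unitrig_unitmx => [|i]; last by rewrite mxE lbidiag_eigcoef_id.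
by apply/is_trig_mxP => a d ad; rewrite mxE lbidiag_eigcoef_gt.
Qed.

End LowerBidiagonal.

Definition pascal_mx (R : nzRingType) n : 'M[R]_n := \matrix_(d, c) 'C(c, d)%:R.

Lemma pascal_mx_unit (R : comUnitRingType) n : pascal_mx R n \in unitmx.
Proof.
rewrite -unitmx_tr; apply: unitrig_unitmx => [|i]; last by rewrite !mxE binn.
by apply/is_trig_mxP => d c dc; rewrite !mxE bin_small.
Qed.

Section Sigma.

Variables (R : numFieldType) (k : nat).

Lemma sigma0 : sigma R k 0 = 0.
Proof. by rewrite /sigma mul0n mul0r. Qed.

Lemma sigmakk : sigma R k k = 0.
Proof. by rewrite /sigma subnn muln0 mul0r. Qed.

Lemma sigmaE i : (i <= k)%N -> sigma R k i = i%:R * (k%:R - i%:R) / 2.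
Proof. by move=> ik; rewrite /sigma natrM natrB. Qed.

End Sigma.

Definition lambda (R : numFieldType) (j d : nat) : R := - \sum_(t < d) (j + t)%N%:R.

Lemma lambdaS (R : numFieldType) j d : lambda R j d.+1 = lambda R j d - (j + d)%N%:R.
Proof. by rewrite /lambda big_ord_recr /= opprD. Qed.

Lemma lambdaE (R : numFieldType) j d :
  lambda R j d = - (d%:R * (2 * j%:R + d%:R - 1)) / 2.
Proof.
elim: d => [|d IH]; first by rewrite /lambda big_ord0 mul0r oppr0 mul0r.
by rewrite lambdaS IH natrD -addn1 natrD; field.
Qed.

Lemma lambda_decr (R : numFieldType) j t a : (0 < j)%N -> (t < a)%N ->
  lambda R j a < lambda R j t.
Proof.
move=> j0; elim: a => // a IH; rewrite ltnS leq_eqVlt => /predU1P[->|/IH ta].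
  by rewrite lambdaS ltrBlDr ltrDl ltr0n addn_gt0 j0.
by rewrite lambdaS (lt_trans _ ta) // ltrBlDr ltrDl ltr0n addn_gt0 j0.
Qed.

(* At [b = 0] the first summand sits at [c = 0 = b.-1]; it vanishes as [sigma_0 = 0]. *)
Lemma MkjE (R : numFieldType) k j (c b : 'I_(k - j + 1)) : Mkj R k j c b =
  (if c == b.-1 :> nat then sigma R k b else 0)
  + (if c == b.+1 :> nat then sigma R k (j + b) else 0)
  - (if c == b :> nat then sigma R k b + sigma R k (j + b) else 0).
Proof.
rewrite mxE; case: c b => [c _] [b _] /=.
repeat (case: eqP => ?); subst; rewrite ?subr0 ?addr0 ?add0r //; try lia.
by rewrite (_ : b = 0%N) ?sigma0 ?sub0r //; lia.
Qed.

(* In the last column [f b.+1] is a junk term: there [j + b = k] and [sigma_k = 0]. *)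
Lemma Mkj_col (R : numFieldType) k j (f : nat -> R) (b : 'I_(k - j + 1)) : (j <= k)%N ->
  \sum_(c < k - j + 1) f c * Mkj R k j c b =
  f b.-1 * sigma R k b - f b * (sigma R k b + sigma R k (j + b))
  + f b.+1 * sigma R k (j + b).
Proof.
move=> jk; under eq_bigr do rewrite MkjE mulrBr mulrDr !(fun_if (GRing.mul (f _))) !mulr0.
rewrite sumrB big_split /= (sum_ord_if_eq (fun c => f c * sigma R k b)).
rewrite (sum_ord_if_eq (fun c => f c * sigma R k (j + b))).
rewrite (sum_ord_if_eq (fun c => f c * (sigma R k b + sigma R k (j + b)))).
rewrite ltn_ord (leq_ltn_trans (leq_pred b) (ltn_ord b)) addrAC.
case: ltnP => // bn; rewrite (_ : j + b = k)%N ?sigmakk ?mulr0 ?addr0 //.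
by have := ltn_ord b; lia.
Qed.

Lemma sigma_binomial_recurrence (R : numFieldType) k j d b :
  (j + b <= k)%N -> (j + d.-1 <= k)%N ->
  'C(b.-1, d)%:R * sigma R k b - 'C(b, d)%:R * (sigma R k b + sigma R k (j + b))
  + 'C(b.+1, d)%:R * sigma R k (j + b) =
  lambda R j d * 'C(b, d)%:R + (if d is d'.+1 then sigma R k (j + d') * 'C(b, d')%:R else 0).
Proof.
case: d => [|d] jbk /= jdk.
  by rewrite !bin0 /lambda big_ord0; ring.
have pascal_prev : sigma R k b * 'C(b.-1, d.+1)%:R =
                   sigma R k b * ('C(b, d.+1)%:R - 'C(b.-1, d)%:R).
  by case: b {jbk} => [|b]; rewrite ?sigma0 ?mul0r // binS natrD addrK.
have absorb_top : b%:R * 'C(b.-1, d)%:R = d.+1%:R * 'C(b, d.+1)%:R :> R.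
  by rewrite -!natrM mul_bin_diag.
have absorb_bot : (b%:R - d%:R) * 'C(b, d)%:R = d.+1%:R * 'C(b, d.+1)%:R :> R.
  have [bd|db] := ltnP b d; first by rewrite !bin_small ?mulr0 // ltnW.
  by rewrite -natrB // -!natrM mul_bin_left.
rewrite binS natrD (mulrC _ (sigma R k b)) pascal_prev.
rewrite !sigmaE ?lambdaE //; last by lia.
set x := 'C(b.-1, d)%:R in absorb_top *; set z := 'C(b, d)%:R in absorb_bot *.
set w := 'C(b, d.+1)%:R in absorb_top absorb_bot *.
apply/eqP; rewrite -subr_eq0; apply/eqP.
transitivity ((b%:R - k%:R) / 2 * (b%:R * x - d.+1%:R * w)
  + (k%:R - 2 * j%:R - b%:R - d%:R) / 2 * ((b%:R - d%:R) * z - d.+1%:R * w)).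
  by ring.
by rewrite absorb_top absorb_bot !subrr !mulr0 addr0.
Qed.

Lemma pascal_Mkj_conj (R : numFieldType) k j : (j <= k)%N ->
  pascal_mx R _ *m Mkj R k j =
  lbidiag_mx _ (lambda R j) (fun e => sigma R k (j + e)) *m pascal_mx R _.
Proof.
move=> jk; apply/matrixP => d b; rewrite !mxE.
under eq_bigr do rewrite [pascal_mx _ _ _ _]mxE.
under [RHS]eq_bigr do rewrite [pascal_mx _ _ _ _]mxE.
rewrite (Mkj_col (fun c => 'C(c, d)%:R)) // (lbidiag_mx_row _ _ _ (fun e => 'C(b, e)%:R)).
by rewrite sigma_binomial_recurrence //; have := ltn_ord b; have := ltn_ord d; lia.
Qed.

Theorem lemmaC1 (R : numFieldType) (k j : nat) :
  (2 <= k)%N -> (1 <= j)%N -> (j <= k)%N ->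
  similar_in unitmx (Mkj R k j) (Dkj R k j).
Proof.
move=> _ j_gt0 jk.
apply: similar_in_unitmx_trans (pascal_mx_unit _ _) (lbidiag_eigmx_unit _ _ _)
  (pascal_Mkj_conj R jk) _.
apply: lbidiag_eigmx_conj => t a /andP[ta _].
by rewrite lt_eqF // lambda_decr.
Qed.
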